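(* Let $G=([n],E)$ be a finite simple loopless undirected graph and let $S_G=\mathrm{span}\{\ket{i}\!\bra{j}:\ i=j\in[n]\ \text{or}\ \{i,j\}\in E\}\subseteq M_n$. Then $\mathcal{H}(S_G)=\mathcal{H}(G)$.
   Context: All scalars are complex; $M_{n\times m}$ denotes complex $n\times m$ matrices, $M_n=M_{n\times n}$, and $\ket{i}$ is the $i$-th standard basis vector. For a linear subspace $S\subseteq M_n$, $M_m(S)$ denotes the set of $m\times m$ block matrices $B=[B_{i,j}]_{i,j\in[m]}$ with every block $B_{i,j}\in S$, viewed as elements of $M_{mn}$. A noncommutative graph is a linear subspace $S\subseteq M_n$ that contains $I_n$ and is closed under conjugate transpose. The Haemers bound of a noncommutative graph $S\subseteq M_n$ is $\mathcal{H}(S)=\min\{\mathrm{rk}(B):\ m\in\mathbb{N},\ B\in M_m(S),\ \sum_{i=1}^m B_{i,i}=I_n\}$. The Haemers bound of a graph $G=([n],E)$ (over $\mathbb{C}$) is $\mathcal{H}(G)=\min\{\mathrm{rk}(B):\ B\in M_n,\ B_{i,i}=1\ \forall i\in[n],\ B_{i,j}=0\ \text{whenever } i\neq j \text{ and } \{i,j\}\notin E\}$. *)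

From mathcomp Require Import all_boot all_algebra.
From mathcomp Require Import complex Rstruct.
From mathcomp Require Import boolp.
From Stdlib Require Import Reals.
Set Implicit Arguments. Unset Strict Implicit. Unset Printing Implicit Defensive.
Import GRing.Theory.
Local Open Scope ring_scope.

Notation CC := (Rdefinitions.R[i]).

(* Minimum of a nonempty set of naturals (0 if empty, which never happens here). *)
Definition natmin (P : nat -> Prop) : nat :=
  match pselect (exists r, P r) with
  | left h => ex_minn (P := fun r => `[< P r >]) (let: ex_intro r Hr := h in
                         ex_intro _ r (asboolT Hr))
  | right _ => 0%N
  end.

Definition blockmx n m (B : 'I_m -> 'I_m -> 'M[CC]_n) :
  'M[CC]_(\sum_(i < m) n) := \mxblock_(i < m, j < m) B i j.

Definition haemers_achievable n (S : {vspace 'M[CC]_n}) (r : nat) : Prop :=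
  exists (m : nat) (B : 'I_m -> 'I_m -> 'M[CC]_n),
    (forall i j, B i j \in S) /\
    \sum_(i < m) B i i = 1%:M /\
    \rank (blockmx B) = r.

Definition haemersS n (S : {vspace 'M[CC]_n}) : nat :=
  natmin (haemers_achievable S).

Definition haemers_graph_achievable n (e : rel 'I_n) (r : nat) : Prop :=
  exists B : 'M[CC]_n,
    (forall i, B i i = 1) /\
    (forall i j, i != j -> ~~ e i j -> B i j = 0) /\
    \rank B = r.

Definition haemersG n (e : rel 'I_n) : nat :=
  natmin (haemers_graph_achievable e).

Definition SG n (e : rel 'I_n) : {vspace 'M[CC]_n} :=
  << [seq delta_mx ij.1 ij.2 | ij <- enum [pred ij : 'I_n * 'I_n |
                                   (ij.1 == ij.2) || e ij.1 ij.2]] >>%VS.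

(* A graph matrix B spreads into the blocks B_kl |k><l| of S_G, whose block
   matrix is B moved to the rows and columns (k, k) and padded by zeros, so its
   rank is at most rk B.  Conversely, since sum_i B_ii = I, every vertex k has a
   block i_k with (B_{i_k i_k})_kk != 0; the principal submatrix of the block
   matrix on the positions (i_k, k) has the support pattern of G and a nonzero
   diagonal, and rescaling its rows gives a graph matrix of no larger rank. *)

From mathcomp Require Import all_boot all_algebra.
From mathcomp Require Import complex Rstruct boolp.
Set Implicit Arguments. Unset Strict Implicit. Unset Printing Implicit Defensive.
Import GRing.Theory.
Local Open Scope ring_scope.

Lemma natmin_eq (P Q : nat -> Prop) :
  (forall r, P r -> exists2 r', Q r' & (r' <= r)%N) ->
  (forall r, Q r -> exists2 r', P r' & (r' <= r)%N) -> natmin P = natmin Q.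
Proof.
rewrite /natmin => PQ QP.
case: pselect => [exP|noP]; case: pselect => [exQ|noQ] //.
- case: ex_minnP => p /asboolP Pp minP; case: ex_minnP => q /asboolP Qq minQ.
  apply/eqP; rewrite eqn_leq.
  have [p' Pp' le_p'q] := QP _ Qq; have [q' Qq' le_q'p] := PQ _ Pp.
  rewrite (leq_trans (minP _ (asboolT Pp')) le_p'q).
  by rewrite (leq_trans (minQ _ (asboolT Qq')) le_q'p).
- by case: noQ; case: exP => r /PQ [r' Qr' _]; exists r'.
- by case: noP; case: exQ => r /QP [r' Pr' _]; exists r'.
Qed.

Lemma mxrank_mxsub (F : fieldType) m n m' n'
    (f : 'I_m' -> 'I_m) (g : 'I_n' -> 'I_n) (A : 'M[F]_(m, n)) :
  (\rank (mxsub f g A) <= \rank A)%N.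
Proof.
rewrite mxsubrc rowsubE -[A in colsub g A]mulmx1 -mulmx_colsub.
exact: leq_trans (mxrankM_maxr _ _) (mxrankM_maxl _ _).
Qed.

Lemma sum_eq1_diag_neq0 (R : nzRingType) (I : finType) n (A : I -> 'M[R]_n) :
  \sum_i A i = 1%:M -> forall k, exists i, A i k k != 0.
Proof.
move=> sumA k; apply/existsP; apply: contra_neqT (oner_neq0 R) => /existsPn A0.
have := congr1 (fun M : 'M[R]_n => M k k) sumA.
rewrite /= summxE mxE eqxx mulr1n => <-.
by rewrite big1 // => i _; apply/eqP; rewrite -[_ == 0]negbK A0.
Qed.

Lemma unit_diag_rescale (F : fieldType) n (A : 'M[F]_n) :
  (forall k, A k k != 0) ->
  exists A' : 'M[F]_n, [/\ forall k, A' k k = 1,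
    forall k l, A k l = 0 -> A' k l = 0 & (\rank A' <= \rank A)%N].
Proof.
move=> Akk; exists (diag_mx (\row_k (A k k)^-1) *m A).
split=> [k|k l Akl|]; last exact: mxrankM_maxr.
  by rewrite mul_diag_mx !mxE mulVf.
by rewrite mul_diag_mx !mxE Akl mulr0.
Qed.

Definition blk m n (i : 'I_m) (k : 'I_n) : 'I_(\sum_(i < m) n) :=
  @order.tagnat.Rank m (fun=> n) i k.

Lemma blk_surj m n (s : 'I_(\sum_(i < m) n)) : exists i k, s = @blk m n i k.
Proof.
exists (order.tagnat.sig1 s), (order.tagnat.sig2 s).
by rewrite /blk order.tagnat.sig2K.
Qed.

Lemma blk_eq m n (i j : 'I_m) (k l : 'I_n) :
  (blk i k == blk j l) = (i == j) && (k == l).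
Proof.
apply/eqP/andP => [/order.tagnat.rank_inj eq_ik_jl | [/eqP-> /eqP->] //].
split; apply/eqP; first exact: (congr1 tag eq_ik_jl).
exact: (congr1 (@tagged _ (fun=> _)) eq_ik_jl).
Qed.

Lemma blockmxE m n (B : 'I_m -> 'I_m -> 'M[CC]_n) i j k l :
  blockmx B (blk i k) (blk j l) = B i j k l.
Proof. by have /matrixP/(_ k l) := mxblockK B i j; rewrite mxE. Qed.

Lemma blockmxP m n (M N : 'M[CC]_(\sum_(i < m) n)) :
  (forall i j k l, M (blk i k) (blk j l) = N (blk i k) (blk j l)) -> M = N.
Proof.
move=> eqMN; apply/matrixP => s t.
by have [i [k ->]] := blk_surj s; have [j [l ->]] := blk_surj t.
Qed.

Lemma mxrank_blockmx_spread m (B : 'M[CC]_m) :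
  (\rank (blockmx (fun i j => B i j *: delta_mx i j)) <= \rank B)%N.
Proof.
(* P moves row k of B to row k of block k. *)
pose P : 'M[CC]_(\sum_(i < m) m, m) := \matrix_(s, k) (s == blk k k)%:R.
suff -> : blockmx (fun i j => B i j *: delta_mx i j) = P *m B *m P^T.
  exact: leq_trans (mxrankM_maxl _ _) (mxrankM_maxr _ _).
apply: blockmxP => i j k l; rewrite blockmxE !mxE.
rewrite (bigD1 j) //= [X in _ + X]big1 ?addr0 => [|b /negbTE nbj];
  last by rewrite !mxE blk_eq eq_sym nbj mulr0.
rewrite !mxE (bigD1 i) //= [X in (_ + X) * _]big1 ?addr0 => [|a /negbTE nai];
  last by rewrite !mxE blk_eq eq_sym nai mul0r.
rewrite !mxE !blk_eq !eqxx.
by case: (k == i); case: (l == j); rewrite /= ?mulr0 ?mul0r ?mulr1 ?mul1r.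
Qed.

Lemma delta_mx_SG n (e : rel 'I_n) k l :
  (k == l) || e k l -> delta_mx k l \in SG e.
Proof.
by move=> kl; apply/memv_span/mapP; exists (k, l); rewrite ?mem_enum.
Qed.

Lemma SG_entry_eq0 n (e : rel 'I_n) (A : 'M[CC]_n) k l :
  A \in SG e -> k != l -> ~~ e k l -> A k l = 0.
Proof.
move=> /coord_span -> nkl nekl; rewrite summxE big1 // => i _; rewrite mxE.
set s := map_tuple _ _.
have /mapP[[a b]] : s`_i \in s by rewrite mem_nth ?size_tuple.
rewrite mem_enum inE /= => ab ->.
rewrite mxE; case: eqP => [ka|]; last by rewrite mulr0.
case: eqP => [lb|]; last by rewrite mulr0.
by move: ab; rewrite -ka -lb (negbTE nkl) (negbTE nekl).
Qed.

Lemma haemers_graph_to_SG n (e : rel 'I_n) r : haemers_graph_achievable e r ->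
  exists2 r', haemers_achievable (SG e) r' & (r' <= r)%N.
Proof.
move=> [B [Bdiag [Bzero <-]]].
pose C k l := B k l *: delta_mx k l.
exists (\rank (blockmx C)); last exact: mxrank_blockmx_spread.
exists n, C; split; last split=> //.
- move=> k l; have [kl|] := boolP ((k == l) || e k l).
    exact/memvZ/delta_mx_SG.
  by rewrite negb_or => /andP [nkl nekl]; rewrite /C Bzero // scale0r mem0v.
- rewrite [RHS]mx1_sum_delta; apply: eq_bigr => k _.
  by rewrite /C Bdiag scale1r.
Qed.

Lemma haemers_SG_to_graph n (e : rel 'I_n) r : haemers_achievable (SG e) r ->
  exists2 r', haemers_graph_achievable e r' & (r' <= r)%N.
Proof.
move=> [m [B [BS [sumB <-]]]].
have /fin_all_exists [f Bf] := sum_eq1_diag_neq0 sumB.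
pose g k := blk (f k) k; pose A := mxsub g g (blockmx B).
have AE k l : A k l = B (f k) (f l) k l by rewrite mxE blockmxE.
have [|A' [A'diag A'zero le_A'A]] := @unit_diag_rescale _ _ A.
  by move=> k; rewrite AE.
exists (\rank A'); last exact: leq_trans le_A'A (mxrank_mxsub _ _ _).
exists A'; split=> //; split=> // k l nkl nekl.
by apply: A'zero; rewrite AE (SG_entry_eq0 (BS _ _) nkl nekl).
Qed.

Theorem mainTheorem1 (n : nat) (e : rel 'I_n)
  (e_sym : symmetric e) (e_irr : irreflexive e) :
  haemersS (SG e) = haemersG e.
Proof.
apply: natmin_eq; [exact: haemers_SG_to_graph | exact: haemers_graph_to_SG].
Qed.
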